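(* Let $(\mathcal I,T)$ be of class $\mathcal{DRI}$, and let $\eta_n=\sup\{|g'(x)|:g\in\mathcal G^n,x\in\mathcal I\}$. (a) If $b'(0)>-1$, then $\eta_1<1$. If $b'(0)=-1$, then $\eta_1=1$ and $\eta_2<1$. (b) For all $n\ge2$, $$\eta_n\le\underline\eta_2^{\,1+\lfloor(n-2)/2\rfloor},\qquad\text{where }\underline\eta_2=\min(\eta_1^2,\eta_2)<1.$$
   Context: Let $\mathcal I=[0,1]$. A binary dynamical system is given by $c\in]0,1[$ and two $C^2$ bijections, $a:[0,1]\to[0,c]$ and $b:[0,1]\to[c,1]$. The map $T$ equals $a^{-1}$ on $]0,c[$ and $b^{-1}$ on $]c,1[$. Class $\mathcal{DR}$: $a$ is increasing, $b$ is decreasing, $a(0)=0$, $a(1)=c$, $b(0)=1$, $b(1)=c$, $a'>0$ and $b'<0$ on $[0,1]$, and $a'(x)<1$, $b'(x)>-1$ for $x\in]0,1]$. Class $\mathcal{DRI}$: class $\mathcal{DR}$ with moreover $a'(0)=1$. The block inverse branches are $g_m=a^{m-1}\circ b$ for $m\ge1$. $\mathcal G^n$ is the set of compositions $g_{m_1}\circ\cdots\circ g_{m_n}$ with $m_i\ge1$. *)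

From Stdlib Require Import Reals List.
Open Scope R_scope.

Definition inI (x : R) : Prop := 0 <= x <= 1.

Definition deriv_within_I (f : R -> R) (x d : R) : Prop :=
  forall eps, 0 < eps -> exists delta, 0 < delta /\
    forall y, inI y -> 0 < Rabs (y - x) < delta ->
      Rabs ((f y - f x) / (y - x) - d) < eps.

Definition deriv_on_I (f f' : R -> R) : Prop :=
  forall x, inI x -> deriv_within_I f x (f' x).

Definition cont_on_I (f : R -> R) : Prop :=
  forall x, inI x -> forall eps, 0 < eps -> exists delta, 0 < delta /\
    forall y, inI y -> Rabs (y - x) < delta -> Rabs (f y - f x) < eps.

Definition C2_on_I (f f' : R -> R) : Prop :=
  deriv_on_I f f' /\ exists f'', deriv_on_I f' f'' /\ cont_on_I f''.

Definition bij_onto (f : R -> R) (lo hi : R) : Prop :=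
  (forall x, inI x -> lo <= f x <= hi) /\
  (forall x y, inI x -> inI y -> f x = f y -> x = y) /\
  (forall z, lo <= z <= hi -> exists x, inI x /\ f x = z).

Definition class_DR (c : R) (a a' b b' : R -> R) : Prop :=
  0 < c < 1 /\
  C2_on_I a a' /\ C2_on_I b b' /\
  bij_onto a 0 c /\ bij_onto b c 1 /\
  (forall x y, inI x -> inI y -> x < y -> a x < a y) /\
  (forall x y, inI x -> inI y -> x < y -> b y < b x) /\
  a 0 = 0 /\ a 1 = c /\ b 0 = 1 /\ b 1 = c /\
  (forall x, inI x -> 0 < a' x) /\ (forall x, inI x -> b' x < 0) /\
  (forall x, 0 < x <= 1 -> a' x < 1) /\ (forall x, 0 < x <= 1 -> -1 < b' x).

Definition class_DRI (c : R) (a a' b b' : R -> R) : Prop :=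
  class_DR c a a' b b' /\ a' 0 = 1.

Fixpoint iterf (n : nat) (f : R -> R) (x : R) : R :=
  match n with O => x | S k => f (iterf k f x) end.

Definition gblock (a b : R -> R) (m : nat) : R -> R :=
  fun x => iterf (Nat.pred m) a (b x).

(* g_{m_1} o ... o g_{m_n} for ms = [m_1; ...; m_n] *)
Definition gcomp (a b : R -> R) (ms : list nat) : R -> R :=
  fold_right (fun m h => fun x => gblock a b m (h x)) (fun x => x) ms.

Definition deriv_set (a b : R -> R) (n : nat) (r : R) : Prop :=
  exists ms : list nat, length ms = n /\ Forall (fun m => (1 <= m)%nat) ms /\
  exists x d, inI x /\ deriv_within_I (gcomp a b ms) x d /\ r = Rabs d.

(* The derivative of a block g_m = a^(m-1) o b is a product of factors a' <= 1
   and one factor b' in [-1, 0).  For m >= 2 it contains a'(b y) with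
   b y in [c, 1], where a' is bounded away from 1 by compactness; for m = 1 it
   is b'(y), bounded away from -1 unless b'(0) = -1, and even then the double
   block g_1 o g_1 has derivative b'(b y) b'(y) with b y in [c, 1].  Hence
   eta_1 <= 1 and eta_2 < 1.  Cutting a composition of n blocks into n/2
   consecutive pairs, each of derivative at most min(eta_1^2, eta_2), and at
   most one single block gives (b). *)

From Stdlib Require Import Reals List Arith Lra Lia.
Import ListNotations.
Open Scope R_scope.

(* Frechet form of [deriv_within_I]: unlike the difference-quotient form it
   composes even at points where [f y = f x]. *)
Definition lin_deriv (f : R -> R) (x d : R) : Prop :=
  forall eps, 0 < eps -> exists delta, 0 < delta /\
    forall y, inI y -> Rabs (y - x) < delta ->
      Rabs (f y - f x - d * (y - x)) <= eps * Rabs (y - x).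

Lemma deriv_within_I_lin f x d : deriv_within_I f x d -> lin_deriv f x d.
Proof.
  intros H eps Heps. destruct (H eps Heps) as [delta [Hdelta Hq]].
  exists delta; split; auto. intros y Iy Hyx.
  destruct (Req_dec y x) as [->|Hne].
  - replace (x - x) with 0 by ring. rewrite Rabs_R0.
    replace (f x - f x - d * 0) with 0 by ring. rewrite Rabs_R0. lra.
  - assert (Hh : y - x <> 0) by lra.
    assert (Hp : 0 < Rabs (y - x)) by (apply Rabs_pos_lt; auto).
    specialize (Hq y Iy (conj Hp Hyx)).
    replace (f y - f x - d * (y - x)) with (((f y - f x) / (y - x) - d) * (y - x))
      by (field; auto).
    rewrite Rabs_mult. apply Rmult_le_compat_r; [apply Rabs_pos | lra].
Qed.

Lemma lin_deriv_within_I f x d : lin_deriv f x d -> deriv_within_I f x d.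
Proof.
  intros H eps Heps. destruct (H (eps / 2)) as [delta [Hdelta Hlin]]; [lra|].
  exists delta; split; auto. intros y Iy [Hpos Hlt].
  specialize (Hlin y Iy Hlt).
  assert (Hh : y - x <> 0) by (intro E; rewrite E, Rabs_R0 in Hpos; lra).
  replace ((f y - f x) / (y - x) - d) with ((f y - f x - d * (y - x)) * / (y - x))
    by (field; auto).
  rewrite Rabs_mult, Rabs_inv.
  apply Rmult_lt_reg_r with (Rabs (y - x)); auto.
  rewrite Rmult_assoc, Rinv_l by lra. nra.
Qed.

Lemma lin_deriv_lipschitz f x d : lin_deriv f x d -> exists delta, 0 < delta /\
  forall y, inI y -> Rabs (y - x) < delta ->
    Rabs (f y - f x) <= (Rabs d + 1) * Rabs (y - x).
Proof.
  intros H. destruct (H 1) as [delta [Hdelta Hlin]]; [lra|].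
  exists delta; split; auto. intros y Iy Hyx. specialize (Hlin y Iy Hyx).
  replace (f y - f x) with ((f y - f x - d * (y - x)) + d * (y - x)) by ring.
  eapply Rle_trans; [apply Rabs_triang|]. rewrite Rabs_mult. lra.
Qed.

Lemma lin_deriv_id x : lin_deriv (fun y => y) x 1.
Proof.
  intros eps Heps. exists 1. split; [lra|]. intros y _ _.
  replace (y - x - 1 * (y - x)) with 0 by ring. rewrite Rabs_R0.
  pose proof (Rabs_pos (y - x)). nra.
Qed.

Lemma lin_deriv_comp f g x d1 d2 : (forall y, inI y -> inI (f y)) ->
  lin_deriv f x d1 -> lin_deriv g (f x) d2 ->
  lin_deriv (fun y => g (f y)) x (d2 * d1).
Proof.
  intros f_inI Hf Hg eps Heps.
  set (K1 := Rabs d1 + 1). set (K2 := Rabs d2 + 1).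
  assert (HK1 : 0 < K1) by (unfold K1; pose proof (Rabs_pos d1); lra).
  assert (HK2 : Rabs d2 < K2) by (unfold K2; lra).
  assert (HK2pos : 0 < K2) by (unfold K2; pose proof (Rabs_pos d2); lra).
  destruct (lin_deriv_lipschitz f x d1 Hf) as [e0 [He0 Hlip]].
  destruct (Hf (eps / (2 * K2))) as [e1 [He1 Hf']].
  { apply Rdiv_lt_0_compat; lra. }
  destruct (Hg (eps / (2 * K1))) as [e2 [He2 Hg']]. { apply Rdiv_lt_0_compat; lra. }
  exists (Rmin e0 (Rmin e1 (e2 / K1))). split.
  { repeat apply Rmin_pos; auto. apply Rdiv_lt_0_compat; lra. }
  intros y Iy Hy.
  pose proof (Rmin_l e0 (Rmin e1 (e2 / K1))). pose proof (Rmin_r e0 (Rmin e1 (e2 / K1))).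
  pose proof (Rmin_l e1 (e2 / K1)). pose proof (Rmin_r e1 (e2 / K1)).
  set (r := Rabs (y - x)) in *.
  assert (Hr : 0 <= r) by apply Rabs_pos.
  assert (Hfy : Rabs (f y - f x) <= K1 * r) by (apply Hlip; auto; fold r; lra).
  assert (Hfy_small : Rabs (f y - f x) < e2).
  { apply Rle_lt_trans with (K1 * r); auto.
    replace e2 with (K1 * (e2 / K1)) by (field; lra).
    apply Rmult_lt_compat_l; lra. }
  specialize (Hg' (f y) (f_inI y Iy) Hfy_small). specialize (Hf' y Iy ltac:(fold r; lra)).
  replace (g (f y) - g (f x) - d2 * d1 * (y - x)) with
    ((g (f y) - g (f x) - d2 * (f y - f x)) + d2 * (f y - f x - d1 * (y - x))) by ring.
  eapply Rle_trans; [apply Rabs_triang|]. rewrite Rabs_mult.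
  assert (Hg_term : eps / (2 * K1) * Rabs (f y - f x) <= eps / 2 * r).
  { apply Rle_trans with (eps / (2 * K1) * (K1 * r)).
    - apply Rmult_le_compat_l; auto. left; apply Rdiv_lt_0_compat; lra.
    - right; field; lra. }
  assert (Hf_term : Rabs d2 * Rabs (f y - f x - d1 * (y - x)) <= eps / 2 * r).
  { fold r in Hf'. set (t := eps / (2 * K2)) in *.
    assert (Ht : 0 < t) by (apply Rdiv_lt_0_compat; lra).
    assert (E : K2 * t = eps / 2) by (unfold t; field; lra).
    apply Rle_trans with (Rabs d2 * (t * r));
      [apply Rmult_le_compat_l; [apply Rabs_pos | auto]|].
    rewrite <- E. assert (0 <= t * r) by (apply Rmult_le_pos; lra). nra. }
  lra.
Qed.

Lemma inI_near x delta : inI x -> 0 < delta ->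
  exists y, inI y /\ 0 < Rabs (y - x) < delta.
Proof.
  intros [H0 H1] Hdelta.
  pose proof (Rmin_l (delta / 2) (1 / 2)). pose proof (Rmin_r (delta / 2) (1 / 2)).
  set (h := Rmin (delta / 2) (1 / 2)) in *.
  assert (Hh : 0 < h) by (apply Rmin_pos; lra).
  destruct (Rle_dec x (1 / 2)).
  - exists (x + h). replace (x + h - x) with h by ring.
    rewrite Rabs_right by lra. unfold inI; lra.
  - exists (x - h). replace (x - h - x) with (- h) by ring.
    rewrite Rabs_Ropp, Rabs_right by lra. unfold inI; lra.
Qed.

Lemma deriv_within_I_unique f x d e :
  inI x -> deriv_within_I f x d -> deriv_within_I f x e -> d = e.
Proof.
  intros Ix Hd He. destruct (Req_dec d e) as [|Hne]; auto. exfalso.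
  set (eps := Rabs (d - e) / 2).
  assert (Heps : 0 < eps) by (unfold eps; pose proof (Rabs_pos_lt (d - e)); lra).
  destruct (Hd eps Heps) as [delta1 [Hdelta1 H1]].
  destruct (He eps Heps) as [delta2 [Hdelta2 H2]].
  destruct (inI_near x (Rmin delta1 delta2) Ix) as [y [Iy [Hy0 Hy1]]].
  { apply Rmin_pos; auto. }
  pose proof (Rmin_l delta1 delta2). pose proof (Rmin_r delta1 delta2).
  specialize (H1 y Iy ltac:(lra)). specialize (H2 y Iy ltac:(lra)).
  set (q := (f y - f x) / (y - x)) in *.
  assert (Rabs (d - e) <= Rabs (q - e) + Rabs (q - d)).
  { replace (d - e) with ((q - e) - (q - d)) by ring.
    unfold Rminus at 1. eapply Rle_trans; [apply Rabs_triang|].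
    rewrite Rabs_Ropp. lra. }
  unfold eps in *. lra.
Qed.

Lemma deriv_on_I_cont f f' : deriv_on_I f f' -> cont_on_I f.
Proof.
  intros Hf x Ix eps Heps.
  destruct (lin_deriv_lipschitz f x (f' x) (deriv_within_I_lin _ _ _ (Hf x Ix)))
    as [delta [Hdelta Hlip]].
  set (K := Rabs (f' x) + 1).
  assert (HK : 0 < K) by (unfold K; pose proof (Rabs_pos (f' x)); lra).
  exists (Rmin delta (eps / K)). split.
  { apply Rmin_pos; auto. apply Rdiv_lt_0_compat; lra. }
  intros y Iy Hy.
  pose proof (Rmin_l delta (eps / K)). pose proof (Rmin_r delta (eps / K)).
  apply Rle_lt_trans with (K * Rabs (y - x)); [apply Hlip; auto; lra|].
  replace eps with (K * (eps / K)) by (field; lra).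
  apply Rmult_lt_compat_l; lra.
Qed.

Lemma cont_on_I_opp f : cont_on_I f -> cont_on_I (fun t => - f t).
Proof.
  intros Hf x Ix eps Heps. destruct (Hf x Ix eps Heps) as [delta [Hdelta H]].
  exists delta; split; auto. intros y Iy Hy.
  replace (- f y - - f x) with (- (f y - f x)) by ring. rewrite Rabs_Ropp. auto.
Qed.

Lemma cont_on_I_le_at_0 f l :
  cont_on_I f -> (forall y, 0 < y <= 1 -> l <= f y) -> l <= f 0.
Proof.
  intros Hf Hl. destruct (Rle_dec l (f 0)) as [|Hlt]; auto. exfalso.
  destruct (Hf 0 ltac:(unfold inI; lra) (l - f 0) ltac:(lra)) as [delta [Hdelta H]].
  pose proof (Rmin_l (delta / 2) 1). pose proof (Rmin_r (delta / 2) 1).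
  assert (Hpos : 0 < Rmin (delta / 2) 1) by (apply Rmin_pos; lra).
  set (y := Rmin (delta / 2) 1) in *.
  assert (Hy : 0 < y <= 1) by lra.
  specialize (H y ltac:(unfold inI; lra)).
  rewrite Rminus_0_r, Rabs_right in H by lra. specialize (H ltac:(lra)).
  pose proof (Rle_abs (f y - f 0)). specialize (Hl y Hy). lra.
Qed.

Definition proj_I (x : R) : R := Rmax 0 (Rmin 1 x).

Lemma proj_I_inI x : inI (proj_I x).
Proof. unfold proj_I, inI, Rmax, Rmin. repeat destruct Rle_dec; lra. Qed.

Lemma proj_I_id x : inI x -> proj_I x = x.
Proof. unfold proj_I, inI, Rmax, Rmin. intros. repeat destruct Rle_dec; lra. Qed.

Lemma proj_I_lipschitz x y : Rabs (proj_I x - proj_I y) <= Rabs (x - y).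
Proof.
  unfold proj_I, Rmax, Rmin. repeat destruct Rle_dec;
  unfold Rabs; repeat destruct Rcase_abs; lra.
Qed.

Lemma cont_on_I_max f p q : cont_on_I f -> 0 <= p <= q -> q <= 1 ->
  exists z, p <= z <= q /\ forall t, p <= t <= q -> f t <= f z.
Proof.
  intros Hf Hpq Hq.
  destruct (continuity_ab_maj (fun x => f (proj_I x)) p q) as [z [Hmax Hz]]; [lra| |].
  - intros x0 Hx0. assert (Ix0 : inI x0) by (unfold inI; lra).
    intros eps Heps. destruct (Hf x0 Ix0 eps Heps) as [delta [Hdelta H]].
    exists delta. split; [lra|]. intros x [_ Hx]. simpl in *. unfold R_dist in *.
    rewrite (proj_I_id x0 Ix0). apply H; [apply proj_I_inI|].
    pose proof (proj_I_lipschitz x x0) as Hl. rewrite (proj_I_id x0 Ix0) in Hl. lra.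
  - exists z. split; auto. intros t Ht. specialize (Hmax t Ht).
    rewrite !proj_I_id in Hmax; auto; unfold inI; lra.
Qed.

Lemma cont_on_I_lt_bound f p q l : cont_on_I f -> 0 <= p <= q -> q <= 1 ->
  (forall y, p <= y <= q -> f y < l) ->
  exists l', l' < l /\ forall y, p <= y <= q -> f y <= l'.
Proof.
  intros Hf Hpq Hq Hlt. destruct (cont_on_I_max f p q Hf Hpq Hq) as [z [Hz Hmax]].
  exists (f z). auto.
Qed.

Section BlockDerivatives.
Variables a a' b b' : R -> R.

Fixpoint iterf_deriv (k : nat) (z : R) : R :=
  match k with
  | O => 1
  | S k => a' (iterf k a z) * iterf_deriv k z
  end.

Definition gblock_deriv (m : nat) (y : R) : R := iterf_deriv (Nat.pred m) (b y) * b' y.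

Fixpoint gcomp_deriv (ms : list nat) (x : R) : R :=
  match ms with
  | [] => 1
  | m :: ms => gblock_deriv m (gcomp a b ms x) * gcomp_deriv ms x
  end.

Lemma gcomp_app ms1 ms2 x : gcomp a b (ms1 ++ ms2) x = gcomp a b ms1 (gcomp a b ms2 x).
Proof. induction ms1 as [|m ms1 IH]; simpl; [reflexivity|]. now rewrite IH. Qed.

Lemma gcomp_deriv_app ms1 ms2 x :
  gcomp_deriv (ms1 ++ ms2) x = gcomp_deriv ms1 (gcomp a b ms2 x) * gcomp_deriv ms2 x.
Proof.
  induction ms1 as [|m ms1 IH]; simpl; [ring|].
  change (fold_right _ _ (ms1 ++ ms2) x) with (gcomp a b (ms1 ++ ms2) x).
  change (fold_right _ _ ms1 (gcomp a b ms2 x)) with (gcomp a b ms1 (gcomp a b ms2 x)).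
  rewrite gcomp_app, IH. ring.
Qed.

Lemma gblock_deriv_lt_2 m y : (m < 2)%nat -> gblock_deriv m y = b' y.
Proof. intros Hm. unfold gblock_deriv. destruct m as [|[|]]; simpl; [ring | ring | lia]. Qed.

Hypotheses (a_inI : forall y, inI y -> inI (a y)) (b_inI : forall y, inI y -> inI (b y)).
Hypotheses (a_deriv : deriv_on_I a a') (b_deriv : deriv_on_I b b').

Lemma iterf_inI k z : inI z -> inI (iterf k a z).
Proof. intros Hz. induction k; simpl; auto. Qed.

Lemma gcomp_inI ms x : inI x -> inI (gcomp a b ms x).
Proof. intros Hx. induction ms; simpl; auto. apply iterf_inI; auto. Qed.

Lemma lin_deriv_iterf k z : inI z -> lin_deriv (iterf k a) z (iterf_deriv k z).
Proof.
  intros Hz. induction k as [|k IH]; [exact (lin_deriv_id z)|].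
  apply (lin_deriv_comp (iterf k a) a z); auto.
  - intros; apply iterf_inI; auto.
  - apply deriv_within_I_lin, a_deriv, iterf_inI; auto.
Qed.

Lemma lin_deriv_gcomp ms x : inI x -> lin_deriv (gcomp a b ms) x (gcomp_deriv ms x).
Proof.
  intros Hx. induction ms as [|m ms IH]; [exact (lin_deriv_id x)|].
  apply (lin_deriv_comp (gcomp a b ms) (gblock a b m) x); auto.
  - intros; apply gcomp_inI; auto.
  - apply (lin_deriv_comp b (iterf (Nat.pred m) a)); auto.
    + apply deriv_within_I_lin, b_deriv, gcomp_inI; auto.
    + apply lin_deriv_iterf, b_inI, gcomp_inI; auto.
Qed.

Lemma deriv_within_I_gcomp ms x :
  inI x -> deriv_within_I (gcomp a b ms) x (gcomp_deriv ms x).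
Proof. intros Hx. apply lin_deriv_within_I, lin_deriv_gcomp; auto. Qed.

End BlockDerivatives.

Section Contraction.
Variables (c : R) (a a' b b' : R -> R) (eta : nat -> R).
Hypotheses (c_bounds : 0 < c < 1) (a_inI : forall y, inI y -> inI (a y))
  (b_range : forall y, inI y -> c <= b y <= 1).
Hypotheses (a_deriv : deriv_on_I a a') (b_deriv : deriv_on_I b b')
  (a'_cont : cont_on_I a') (b'_cont : cont_on_I b').
Hypotheses (a'_pos : forall y, inI y -> 0 < a' y) (b'_neg : forall y, inI y -> b' y < 0)
  (a'_lt_1 : forall y, 0 < y <= 1 -> a' y < 1)
  (b'_gt_m1 : forall y, 0 < y <= 1 -> -1 < b' y).
Hypothesis eta_lub : forall n, (1 <= n)%nat -> is_lub (deriv_set a b n) (eta n).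

Local Notation D := (gcomp_deriv a a' b b').
Local Notation Dblock := (gblock_deriv a a' b b').
Local Notation blocks ms := (Forall (fun m => (1 <= m)%nat) ms).

Lemma b_inI y : inI y -> inI (b y).
Proof. intros Hy. specialize (b_range y Hy). unfold inI; lra. Qed.

Lemma a'_le_1 y : inI y -> a' y <= 1.
Proof.
  intros Hy. destruct (Req_dec y 0) as [->|Hy0].
  - assert (H : -1 <= - a' 0).
    { apply (cont_on_I_le_at_0 (fun t => - a' t)); [apply cont_on_I_opp; auto|].
      intros t Ht. specialize (a'_lt_1 t Ht). lra. }
    lra.
  - left. apply a'_lt_1. unfold inI in Hy; lra.
Qed.

Lemma b'_ge_m1 y : inI y -> -1 <= b' y.
Proof.
  intros Hy. destruct (Req_dec y 0) as [->|Hy0].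
  - apply cont_on_I_le_at_0; auto. intros t Ht. left; auto.
  - left. apply b'_gt_m1. unfold inI in Hy; lra.
Qed.

Lemma iterf_deriv_range k z : inI z -> 0 <= iterf_deriv a a' k z <= 1.
Proof.
  intros Hz. induction k as [|k IH]; simpl; [lra|].
  pose proof (iterf_inI a a_inI k z Hz) as Ik.
  pose proof (a'_pos _ Ik). pose proof (a'_le_1 _ Ik). nra.
Qed.

Lemma iterf_deriv_S_le k z : inI z -> iterf_deriv a a' (S k) z <= a' z.
Proof.
  intros Hz. induction k as [|k IH]; [simpl; lra|].
  change (iterf_deriv a a' (S (S k)) z)
    with (a' (iterf (S k) a z) * iterf_deriv a a' (S k) z).
  pose proof (iterf_inI a a_inI (S k) z Hz) as Ik.
  pose proof (a'_le_1 _ Ik). pose proof (iterf_deriv_range (S k) z Hz). nra.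
Qed.

Lemma abs_gblock_deriv m y :
  inI y -> Rabs (Dblock m y) = iterf_deriv a a' (Nat.pred m) (b y) * - b' y.
Proof.
  intros Hy. unfold gblock_deriv. rewrite Rabs_mult.
  pose proof (iterf_deriv_range (Nat.pred m) (b y) (b_inI y Hy)).
  rewrite Rabs_right, Rabs_left by (auto; lra). reflexivity.
Qed.

Lemma abs_gblock_deriv_le_1 m y : inI y -> Rabs (Dblock m y) <= 1.
Proof.
  intros Hy. rewrite abs_gblock_deriv by auto.
  pose proof (iterf_deriv_range (Nat.pred m) (b y) (b_inI y Hy)).
  pose proof (b'_ge_m1 y Hy). pose proof (b'_neg y Hy). nra.
Qed.

Lemma gblock_deriv_contract : exists alpha, alpha < 1 /\
  forall m y, (2 <= m)%nat -> inI y -> Rabs (Dblock m y) <= alpha.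
Proof.
  destruct (cont_on_I_lt_bound a' c 1 1 a'_cont ltac:(lra) ltac:(lra))
    as [alpha [Halpha Hmax]]; [intros y Hy; apply a'_lt_1; lra|].
  exists alpha. split; auto. intros m y Hm Hy.
  rewrite abs_gblock_deriv by auto.
  destruct m as [|[|m]]; try lia. simpl Nat.pred.
  pose proof (iterf_deriv_S_le m (b y) (b_inI y Hy)).
  pose proof (iterf_deriv_range (S m) (b y) (b_inI y Hy)).
  pose proof (Hmax (b y) (b_range y Hy)).
  pose proof (b'_ge_m1 y Hy). pose proof (b'_neg y Hy). nra.
Qed.

Lemma gblock_deriv_contract_strict : b' 0 > -1 -> exists gamma, gamma < 1 /\
  forall m y, inI y -> Rabs (Dblock m y) <= gamma.
Proof.
  intros Hb'0. destruct gblock_deriv_contract as [alpha [Halpha Hblock]].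
  assert (Hlt : forall y, 0 <= y <= 1 -> - b' y < 1).
  { intros y Hy. destruct (Req_dec y 0) as [->|]; [lra|].
    specialize (b'_gt_m1 y ltac:(lra)). lra. }
  destruct (cont_on_I_lt_bound _ 0 1 1 (cont_on_I_opp _ b'_cont) ltac:(lra) ltac:(lra) Hlt)
    as [beta [Hbeta Hmax]].
  exists (Rmax alpha beta). split; [apply Rmax_lub_lt; auto|]. intros m y Hy.
  destruct (Nat.lt_ge_cases m 2) as [Hm|Hm].
  - rewrite gblock_deriv_lt_2 by auto. pose proof (b'_neg y Hy).
    rewrite Rabs_left by auto. eapply Rle_trans; [apply Hmax; apply Hy | apply Rmax_r].
  - eapply Rle_trans; [apply Hblock; auto | apply Rmax_l].
Qed.

Lemma gcomp_deriv_pair_contract : exists beta, beta < 1 /\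
  forall m1 m2 y, inI y -> Rabs (D [m1; m2] y) <= beta.
Proof.
  destruct gblock_deriv_contract as [alpha [Halpha Hblock]].
  assert (Hlt : forall y, c <= y <= 1 -> - b' y < 1).
  { intros y Hy. specialize (b'_gt_m1 y ltac:(lra)). lra. }
  destruct (cont_on_I_lt_bound _ c 1 1 (cont_on_I_opp _ b'_cont) ltac:(lra) ltac:(lra) Hlt)
    as [beta [Hbeta Hmax]].
  exists (Rmax alpha beta). split; [apply Rmax_lub_lt; auto|]. intros m1 m2 y Hy.
  set (z := gcomp a b [m2] y).
  assert (Iz : inI z) by (apply gcomp_inI; auto using b_inI).
  change (D [m1; m2] y) with (Dblock m1 z * (Dblock m2 y * 1)).
  rewrite Rmult_1_r, Rabs_mult.
  pose proof (abs_gblock_deriv_le_1 m1 z Iz). pose proof (abs_gblock_deriv_le_1 m2 y Hy).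
  pose proof (Rabs_pos (Dblock m1 z)). pose proof (Rabs_pos (Dblock m2 y)).
  destruct (Nat.lt_ge_cases m1 2) as [Hm1|Hm1];
  [destruct (Nat.lt_ge_cases m2 2) as [Hm2|Hm2]|].
  - assert (Ez : z = b y).
    { unfold z, gcomp, gblock. destruct m2 as [|[|]]; simpl; auto; lia. }
    rewrite (gblock_deriv_lt_2 _ _ _ _ m1) by auto. rewrite Ez.
    pose proof (Hmax (b y) (b_range y Hy)). pose proof (b'_neg (b y) (b_inI y Hy)).
    rewrite Rabs_left by auto. apply Rle_trans with beta; [nra | apply Rmax_r].
  - pose proof (Hblock m2 y Hm2 Hy). apply Rle_trans with alpha; [nra | apply Rmax_l].
  - pose proof (Hblock m1 z Hm1 Iz). apply Rle_trans with alpha; [nra | apply Rmax_l].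
Qed.

Lemma abs_gcomp_deriv_le_eta ms x : blocks ms -> (1 <= length ms)%nat -> inI x ->
  Rabs (D ms x) <= eta (length ms).
Proof.
  intros Hms Hlen Hx. apply (proj1 (eta_lub _ Hlen)).
  exists ms. split; [reflexivity|]. split; [exact Hms|].
  exists x, (D ms x). split; [exact Hx|]. split; [|reflexivity].
  apply deriv_within_I_gcomp; auto using b_inI.
Qed.

Lemma eta_le_bound n M : (1 <= n)%nat ->
  (forall ms x, blocks ms -> length ms = n -> inI x -> Rabs (D ms x) <= M) -> eta n <= M.
Proof.
  intros Hn HM. apply (proj2 (eta_lub n Hn)).
  intros r [ms [Hlen [Hms [x [d [Hx [Hd ->]]]]]]].
  rewrite (deriv_within_I_unique _ x d (D ms x) Hx Hd); auto.
  apply deriv_within_I_gcomp; auto using b_inI.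
Qed.

Lemma eta_1_le_1 : eta 1 <= 1.
Proof.
  apply eta_le_bound; auto. intros ms x _ Hlen Hx.
  destruct ms as [|m [|]]; try discriminate.
  simpl; rewrite Rmult_1_r. apply abs_gblock_deriv_le_1; auto.
Qed.

Lemma eta_1_lt_1 : b' 0 > -1 -> eta 1 < 1.
Proof.
  intros Hb'0. destruct (gblock_deriv_contract_strict Hb'0) as [gamma [Hgamma Hblock]].
  apply Rle_lt_trans with gamma; auto. apply eta_le_bound; auto.
  intros ms x _ Hlen Hx. destruct ms as [|m [|]]; try discriminate.
  simpl; rewrite Rmult_1_r. auto.
Qed.

Lemma eta_1_eq_1 : b' 0 = -1 -> eta 1 = 1.
Proof.
  intros Hb'0. apply Rle_antisym; [apply eta_1_le_1|].
  replace 1 with (Rabs (D [1%nat] 0)).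
  - apply (abs_gcomp_deriv_le_eta [1%nat]); auto. unfold inI; lra.
  - simpl. unfold gblock_deriv. simpl. rewrite Hb'0, Rabs_left; lra.
Qed.

Lemma eta_2_lt_1 : eta 2 < 1.
Proof.
  destruct gcomp_deriv_pair_contract as [beta [Hbeta Hpair]].
  apply Rle_lt_trans with beta; auto. apply eta_le_bound; auto.
  intros ms x _ Hlen Hx. destruct ms as [|m1 [|m2 []]]; try discriminate. auto.
Qed.

Lemma abs_gcomp_deriv_le_pow ms x : blocks ms -> inI x ->
  Rabs (D ms x) <= Rmin (eta 1 ^ 2) (eta 2) ^ (length ms / 2).
Proof.
  set (mu := Rmin (eta 1 ^ 2) (eta 2)).
  assert (Hpair : forall m1 m2 y, (1 <= m1)%nat -> (1 <= m2)%nat -> inI y ->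
    Rabs (D [m1; m2] y) <= mu).
  { intros m1 m2 y H1 H2 Hy. apply Rmin_glb.
    - assert (Iz : inI (gcomp a b [m2] y)) by (apply gcomp_inI; auto using b_inI).
      change [m1; m2] with ([m1] ++ [m2]). rewrite gcomp_deriv_app, Rabs_mult.
      pose proof (abs_gcomp_deriv_le_eta [m1] _ ltac:(repeat constructor; lia) ltac:(simpl; lia) Iz).
      pose proof (abs_gcomp_deriv_le_eta [m2] _ ltac:(repeat constructor; lia) ltac:(simpl; lia) Hy).
      pose proof (Rabs_pos (D [m1] (gcomp a b [m2] y))). pose proof (Rabs_pos (D [m2] y)).
      simpl length in *. simpl pow. nra.
    - apply (abs_gcomp_deriv_le_eta [m1; m2]); [repeat constructor; lia | simpl; lia | auto]. }
  assert (Hmu : 0 <= mu).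
  { apply Rmin_glb; [nra|]. apply Rle_trans with (Rabs (D [1; 1]%nat 0)); [apply Rabs_pos|].
    apply (abs_gcomp_deriv_le_eta [1; 1]%nat); [repeat constructor | simpl; lia | unfold inI; lra]. }
  remember (length ms) as n eqn:Hn. revert ms x Hn.
  induction n as [n IH] using lt_wf_ind. intros ms x Hn Hms Hx.
  destruct ms as [|m1 [|m2 rest]]; subst n.
  - simpl. rewrite Rabs_R1. lra.
  - change (D [m1] x) with (Dblock m1 x * 1). rewrite Rmult_1_r.
    apply abs_gblock_deriv_le_1; auto.
  - inversion Hms as [|? ? H1 Hms']. inversion Hms' as [|? ? H2 Hrest].
    change (m1 :: m2 :: rest) with ([m1; m2] ++ rest). rewrite gcomp_deriv_app, Rabs_mult.
    replace (length ([m1; m2] ++ rest) / 2)%nat with (S (length rest / 2)).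
    2:{ simpl length. replace (S (S (length rest))) with (length rest + 1 * 2)%nat by lia.
        rewrite Nat.div_add by lia. lia. }
    simpl pow. apply Rmult_le_compat; try apply Rabs_pos.
    + apply Hpair; auto. apply gcomp_inI; auto using b_inI.
    + apply (IH (length rest)); auto. simpl length. lia.
Qed.

Lemma eta_le_pow n : (2 <= n)%nat -> eta n <= Rmin (eta 1 ^ 2) (eta 2) ^ (n / 2).
Proof.
  intros Hn. apply eta_le_bound; [lia|]. intros ms x Hms Hlen Hx. subst n.
  apply abs_gcomp_deriv_le_pow; auto.
Qed.

End Contraction.

Theorem lemma7p3 (c : R) (a a' b b' : R -> R) (eta : nat -> R) :
  class_DRI c a a' b b' ->
  (forall n, (1 <= n)%nat -> is_lub (deriv_set a b n) (eta n)) ->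
  ((b' 0 > -1 -> eta 1%nat < 1) /\
   (b' 0 = -1 -> eta 1%nat = 1 /\ eta 2%nat < 1)) /\
  (forall n, (2 <= n)%nat ->
     eta n <= (Rmin (eta 1%nat ^ 2) (eta 2%nat)) ^ (1 + (n - 2) / 2) /\
     Rmin (eta 1%nat ^ 2) (eta 2%nat) < 1).
Proof.
  intros [HDR _] eta_lub.
  destruct HDR as (c_bounds & [a_deriv [a'' [a'_deriv _]]] & [b_deriv [b'' [b'_deriv _]]]
    & [a_range _] & [b_range _] & _ & _ & _ & _ & _ & _
    & a'_pos & b'_neg & a'_lt_1 & b'_gt_m1).
  assert (a_inI : forall y, inI y -> inI (a y))
    by (intros y Hy; specialize (a_range y Hy); unfold inI; lra).
  pose proof (deriv_on_I_cont _ _ a'_deriv) as a'_cont.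
  pose proof (deriv_on_I_cont _ _ b'_deriv) as b'_cont.
  assert (eta2 : eta 2%nat < 1) by (eapply eta_2_lt_1; eauto).
  split; [split|].
  - intros Hb'0. eapply eta_1_lt_1; eauto.
  - intros Hb'0. split; auto. eapply eta_1_eq_1; eauto.
  - intros n Hn. split; [|apply Rle_lt_trans with (eta 2%nat); [apply Rmin_r | auto]].
    replace (1 + (n - 2) / 2)%nat with (n / 2)%nat.
    + eapply eta_le_pow; eauto.
    + replace n with (n - 2 + 1 * 2)%nat at 1 by lia. rewrite Nat.div_add by lia. lia.
Qed.
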